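(* Let $\mathcal{B}$ be a complete topological ring and let $\mathrm{e}\colon\mathcal{B}\to\mathcal{B}\{T\}$ be a restricted exponential homomorphism. Let $S\subseteq\mathcal{B}^{\mathrm{e}}$ be a multiplicatively closed subset, let $\tilde j\colon\mathcal{B}\to\widehat{S^{-1}\mathcal{B}}$ be the separated completed localization homomorphism and let $\tilde j_T\colon\mathcal{B}\{T\}\to\widehat{S^{-1}\mathcal{B}}\{T\}$ be the induced homomorphism $\sum_ib_iT^i\mapsto\sum_i\tilde j(b_i)T^i$. Then there exists a unique restricted exponential homomorphism $\widehat{S^{-1}\mathrm{e}}\colon\widehat{S^{-1}\mathcal{B}}\to\widehat{S^{-1}\mathcal{B}}\{T\}$ such that $\tilde j_T\circ\mathrm{e}=\widehat{S^{-1}\mathrm{e}}\circ\tilde j$.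
   Context: Conventions: topological rings are linearly topologized with a countable fundamental system of open ideals; homomorphisms are continuous; complete means the canonical map to $\varprojlim_{\mathfrak{a}}\mathcal{B}/\mathfrak{a}$ (open ideals, discrete quotients) is a topological isomorphism. For complete $\mathcal{C}$, $\mathcal{C}\{T\}$, $\mathcal{C}\{T,T'\}$ denote restricted power series (coefficients converging to $0$), topologized by the ideals of series with all coefficients in a given open ideal. A restricted exponential homomorphism of a complete ring $\mathcal{C}$ is a continuous ring homomorphism $\mathrm{e}\colon\mathcal{C}\to\mathcal{C}\{T\}$, $\mathrm{e}(c)=\sum_i\mathrm{e}_i(c)T^i$, with $\mathrm{e}_0=\mathrm{id}$ and $\sum_{i,j}\mathrm{e}_j(\mathrm{e}_i(c))T'^jT^i=\sum_\ell\mathrm{e}_\ell(c)(T+T')^\ell$ for all $c$. $\mathcal{B}^{\mathrm{e}}=\{b:\mathrm{e}(b)=b\}$. A multiplicatively closed subset contains $1$ and is stable under multiplication. The separated completed localization $\widehat{S^{-1}\mathcal{B}}$ is the separated completion of $S^{-1}\mathcal{B}$ for the linear topology with fundamental system of ideals $S^{-1}\mathfrak{b}$, $\mathfrak{b}$ open in $\mathcal{B}$, and $\tilde j$ is the composite $\mathcal{B}\to S^{-1}\mathcal{B}\to\widehat{S^{-1}\mathcal{B}}$. *)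

From mathcomp Require Import all_boot all_algebra.
Set Implicit Arguments. Unset Strict Implicit. Unset Printing Implicit Defensive.
Import GRing.Theory.
Local Open Scope ring_scope.

(* A "raw" linearly topologized ring presented as a setoid:                 *)
(*   lt_dom   : the elements of the carrier that represent ring elements    *)
(*   lt_eqv   : equality of the represented ring                            *)
(*   lt_ideal n : the n-th member of a (decreasing) countable fundamental   *)
(*               system of open ideals; the open ideals are exactly the     *)
(*               ideals containing some lt_ideal n.                         *)
(* This generic presentation is used both for B (Leibniz equality) and for  *)
(* the separated completed localization (Cauchy sequences modulo null       *)
(* sequences), so that "restricted exponential homomorphism" is defined     *)
(* once and for all.                                                        *)
Record ltring := LTRing {
  lt_car : Type;
  lt_dom : lt_car -> Prop;
  lt_eqv : lt_car -> lt_car -> Prop;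
  lt_zero : lt_car;
  lt_one : lt_car;
  lt_add : lt_car -> lt_car -> lt_car;
  lt_opp : lt_car -> lt_car;
  lt_mul : lt_car -> lt_car -> lt_car;
  lt_ideal : nat -> lt_car -> Prop }.

Section Generic.
Variable R : ltring.
Local Notation C := (lt_car R).

Fixpoint lt_sum (n : nat) (f : nat -> C) : C :=
  match n with
  | 0%N => lt_zero R
  | n'.+1 => lt_add (lt_sum n' f) (f n')
  end.

Definition lt_natmul (k : nat) (x : C) : C := iter k (lt_add x) (lt_zero R).

(* A restricted exponential homomorphism E : R -> R{T},
   E x = sum_i (E x i) T^i, written out coefficientwise. *)
Definition is_rexp (E : C -> nat -> C) : Prop :=
  (forall x i, lt_dom x -> lt_dom (E x i)) /\
  (forall x y i, lt_dom x -> lt_dom y -> lt_eqv x y -> lt_eqv (E x i) (E y i)) /\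
  (* E x is a restricted power series: coefficients converge to 0 *)
  (forall x, lt_dom x -> forall n, exists N, forall i, (N <= i)%N -> lt_ideal n (E x i)) /\
  (forall x y i, lt_dom x -> lt_dom y ->
     lt_eqv (E (lt_add x y) i) (lt_add (E x i) (E y i))) /\
  (forall x y l, lt_dom x -> lt_dom y ->
     lt_eqv (E (lt_mul x y) l)
            (lt_sum l.+1 (fun i => lt_mul (E x i) (E y (l - i)%N)))) /\
  (forall l, lt_eqv (E (lt_one R) l) (if l == 0%N then lt_one R else lt_zero R)) /\
  (* continuity (R{T} topologized by the ideals I{T}) *)
  (forall n, exists m, forall x, lt_dom x -> lt_ideal m x ->
      forall i, lt_ideal n (E x i)) /\
  (forall x, lt_dom x -> lt_eqv (E x 0%N) x) /\
  (* sum_{i,j} e_j(e_i c) T'^j T^i = sum_l e_l(c) (T+T')^l, compared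
     coefficient of T^i T'^j (binomial expansion of (T+T')^(i+j)) *)
  (forall x i j, lt_dom x ->
     lt_eqv (E (E x i) j) (lt_natmul 'C(i + j, i) (E x (i + j)%N))).

(* elements b with e(b) = b (constant series) *)
Definition rexp_fixed (E : C -> nat -> C) (x : C) : Prop :=
  forall i, lt_eqv (E x i) (if i == 0%N then x else lt_zero R).

End Generic.

Section OnB.
Variable B : comPzRingType.
Variable I : nat -> B -> Prop.

Definition is_ideal (J : B -> Prop) : Prop :=
  J 0 /\ (forall x y, J x -> J y -> J (x + y)) /\ (forall a x, J x -> J (a * x)).

Definition fund_system : Prop :=
  (forall n, is_ideal (I n)) /\ (forall n x, I n.+1 x -> I n x).

(* completeness: B -> lim_n B/I_n is bijective (then automatically a
   topological isomorphism) *)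
Definition complete_ring : Prop :=
  (forall x : B, (forall n, I n x) -> x = 0) /\
  (forall x : nat -> B, (forall n, I n (x n.+1 - x n)) ->
     exists b, forall n, I n (b - x n)).

Definition ltB : ltring :=
  @LTRing B (fun _ => True) (@eq B) 0 1 +%R -%R *%R I.

Definition mult_closed (S : B -> Prop) : Prop :=
  S 1 /\ (forall s t, S s -> S t -> S (s * t)).

Variable S : B -> Prop.

(* fractions a/s are pairs (a, s) with s in S *)
Definition frac_sub (u v : B * B) : B * B :=
  (u.1 * v.2 - v.1 * u.2, u.2 * v.2).
Definition frac_add (u v : B * B) : B * B :=
  (u.1 * v.2 + v.1 * u.2, u.2 * v.2).
Definition frac_mul (u v : B * B) : B * B := (u.1 * v.1, u.2 * v.2).
Definition frac_opp (u : B * B) : B * B := (- u.1, u.2).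

(* a/s lies in S^{-1} I_n *)
Definition in_SI (n : nat) (u : B * B) : Prop := exists t, S t /\ I n (t * u.1).

(* elements of the completion: Cauchy sequences in S^{-1}B for the
   topology defined by the ideals S^{-1} I_n ... *)
Definition loc_valid (u : nat -> B * B) : Prop :=
  (forall k, S (u k).2) /\
  (forall n, exists N, forall k k', (N <= k)%N -> (N <= k')%N ->
      in_SI n (frac_sub (u k) (u k'))).

(* ... modulo null sequences (this also quotients by the equality of
   S^{-1}B and makes the result separated) *)
Definition loc_eqv (u v : nat -> B * B) : Prop :=
  forall n, exists N, forall k, (N <= k)%N -> in_SI n (frac_sub (u k) (v k)).

(* open ideals of the completion: kernels of (S^{-1}B)^ -> S^{-1}B/S^{-1}I_n *)
Definition loc_ideal (n : nat) (u : nat -> B * B) : Prop :=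
  exists N, forall k, (N <= k)%N -> in_SI n (u k).

Definition ltLoc : ltring :=
  @LTRing (nat -> B * B) loc_valid loc_eqv
    (fun _ => (0, 1)) (fun _ => (1, 1))
    (fun u v k => frac_add (u k) (v k))
    (fun u k => frac_opp (u k))
    (fun u v k => frac_mul (u k) (v k))
    loc_ideal.

Definition jloc (b : B) : nat -> B * B := fun _ => (b, 1).

End OnB.

From mathcomp Require Import all_boot all_algebra.
From mathcomp Require Import ring.
Set Implicit Arguments. Unset Strict Implicit. Unset Printing Implicit Defensive.
Import GRing.Theory.
Local Open Scope ring_scope.

(* Every s in S is e-constant, so the product rule makes each coefficient map
   e_i S-linear: e_i (b s) = e_i b * s.  Hence e_i (a) / s is well defined on
   fractions, and the continuity of e makes it continuous for the ideals
   S^-1 I_n, so it acts termwise on Cauchy sequences of fractions.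
   Conversely, any E' compatible with j~ satisfies E'(a/s) * s = E'(a) = e(a)
   by the product rule, since E'(s) = s, and continuity extends this from
   constant fractions to the whole completion. *)

Section RexpAxioms.
Variables (R : ltring) (E : lt_car R -> nat -> lt_car R).
Hypothesis hE : is_rexp E.

Lemma rexp_dom x i : lt_dom x -> lt_dom (E x i).
Proof. by case: hE => + _; apply. Qed.

Lemma rexp_eqv x y i : lt_dom x -> lt_dom y -> lt_eqv x y ->
  lt_eqv (E x i) (E y i).
Proof. by case: hE => _ [+ _]; apply. Qed.

Lemma rexp_restricted x n : lt_dom x ->
  exists N, forall i, (N <= i)%N -> lt_ideal n (E x i).
Proof. by move=> dx; case: hE => _ [_ [+ _]]; apply. Qed.

Lemma rexp_add x y i : lt_dom x -> lt_dom y ->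
  lt_eqv (E (lt_add x y) i) (lt_add (E x i) (E y i)).
Proof. by case: hE => _ [_ [_ [+ _]]]; apply. Qed.

Lemma rexp_mul x y l : lt_dom x -> lt_dom y ->
  lt_eqv (E (lt_mul x y) l)
         (lt_sum l.+1 (fun i => lt_mul (E x i) (E y (l - i)%N))).
Proof. by case: hE => _ [_ [_ [_ [+ _]]]]; apply. Qed.

Lemma rexp_one l : lt_eqv (E (lt_one R) l) (if l == 0%N then lt_one R else lt_zero R).
Proof. by case: hE => _ [_ [_ [_ [_ [+ _]]]]]; apply. Qed.

Lemma rexp_cont n : exists m, forall x, lt_dom x -> lt_ideal m x ->
  forall i, lt_ideal n (E x i).
Proof. by case: hE => _ [_ [_ [_ [_ [_ [+ _]]]]]]; apply. Qed.

Lemma rexp_id x : lt_dom x -> lt_eqv (E x 0%N) x.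
Proof. by case: hE => _ [_ [_ [_ [_ [_ [_ [+ _]]]]]]]; apply. Qed.

Lemma rexp_iter x i j : lt_dom x ->
  lt_eqv (E (E x i) j) (lt_natmul 'C(i + j, i) (E x (i + j)%N)).
Proof. by case: hE => _ [_ [_ [_ [_ [_ [_ [_ +]]]]]]]; apply. Qed.

End RexpAxioms.

Section Localization.
Variables (B : comPzRingType) (I : nat -> B -> Prop) (S : B -> Prop).
Hypotheses (hI : fund_system I) (hS : mult_closed S).

Lemma ideal0 n : I n 0.
Proof. by case: hI => /(_ n) []. Qed.

Lemma idealD n a b : I n a -> I n b -> I n (a + b).
Proof. by case: hI => /(_ n) [_ [+ _]] _; apply. Qed.

Lemma idealMl n x a : I n a -> I n (x * a).
Proof. by case: hI => /(_ n) [_ [_ +]] _; apply. Qed.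

Lemma ideal_decr n m a : (n <= m)%N -> I m a -> I n a.
Proof.
move=> /subnK <-; elim: (m - n)%N => [|j IHj] //= h.
by apply: IHj; case: hI => _; apply; rewrite -addSn.
Qed.

Lemma mult_closed1 : S 1.
Proof. by case: hS. Qed.

Lemma mult_closedM s t : S s -> S t -> S (s * t).
Proof. by case: hS => _; apply. Qed.

(* The contraction of S^-1 I_n to B; [in_SI n u] is [satI n u.1]. *)
Definition satI n (a : B) : Prop := exists t, S t /\ I n (t * a).

Lemma eq_satI n a b : a = b -> satI n a -> satI n b.
Proof. by move->. Qed.

Lemma satI0 n : satI n 0.
Proof. by exists 1; rewrite mulr0; split; [apply: mult_closed1 | apply: ideal0]. Qed.

Lemma satID n a b : satI n a -> satI n b -> satI n (a + b).
Proof.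
move=> [t1 [St1 h1]] [t2 [St2 h2]]; exists (t1 * t2).
split; first exact: mult_closedM.
have -> : t1 * t2 * (a + b) = t2 * (t1 * a) + t1 * (t2 * b) by ring.
by apply: idealD; apply: idealMl.
Qed.

Lemma satIMl n x a : satI n a -> satI n (x * a).
Proof. by move=> [t [St h]]; exists t; rewrite mulrCA; split => //; apply: idealMl. Qed.

Lemma satIN n a : satI n a -> satI n (- a).
Proof. by rewrite -mulN1r; apply: satIMl. Qed.

Lemma satI_cancel n s a : S s -> satI n (s * a) -> satI n a.
Proof. by move=> Ss [t [St h]]; exists (t * s); rewrite -mulrA; split => //; apply: mult_closedM. Qed.

Lemma satI_decr n m a : (n <= m)%N -> satI m a -> satI n a.
Proof. by move=> nm [t [St h]]; exists t; split => //; apply: ideal_decr h. Qed.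

Lemma satI_of_ideal n a : I n a -> satI n a.
Proof. by exists 1; rewrite mul1r; split => //; apply: mult_closed1. Qed.

(* [frac_near n p q] is [in_SI n (frac_sub p q)]: p - q lies in S^-1 I_n. *)
Definition frac_near n (p q : B * B) : Prop := satI n (p.1 * q.2 - q.1 * p.2).

Lemma frac_near_eq n p q : p.1 * q.2 = q.1 * p.2 -> frac_near n p q.
Proof. by rewrite /frac_near => ->; rewrite subrr; apply: satI0. Qed.

Lemma frac_near_refl n p : frac_near n p p.
Proof. exact: frac_near_eq. Qed.

Lemma frac_near_sym n p q : frac_near n p q -> frac_near n q p.
Proof. by move=> /satIN; apply: eq_satI; ring. Qed.

Lemma frac_near_trans n p q r : S q.2 ->
  frac_near n p q -> frac_near n q r -> frac_near n p r.
Proof.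
move=> Sq hpq hqr; apply: (satI_cancel Sq).
by apply: eq_satI (satID (satIMl r.2 hpq) (satIMl p.2 hqr)); ring.
Qed.

Lemma frac_near_add n p p' q q' : frac_near n p p' -> frac_near n q q' ->
  frac_near n (frac_add p q) (frac_add p' q').
Proof.
move=> hp hq; apply: eq_satI (satID (satIMl (q.2 * q'.2) hp) (satIMl (p.2 * p'.2) hq)).
by rewrite /frac_add /=; ring.
Qed.

Lemma frac_near_mul n p p' q q' : frac_near n p p' -> frac_near n q q' ->
  frac_near n (frac_mul p q) (frac_mul p' q').
Proof.
move=> hp hq; apply: eq_satI (satID (satIMl (q.1 * q'.2) hp) (satIMl (p'.1 * p.2) hq)).
by rewrite /frac_mul /=; ring.
Qed.

Lemma frac_near_opp n p q : frac_near n p q -> frac_near n (frac_opp p) (frac_opp q).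
Proof. by move=> /satIN; apply: eq_satI; rewrite /frac_opp /=; ring. Qed.

Definition den_in_S (u : nat -> B * B) : Prop := forall k, S (u k).2.

Lemma loc_eqv_pointwise u v : (forall n k, frac_near n (u k) (v k)) -> loc_eqv I S u v.
Proof. by move=> h n; exists 0%N => k _; apply: h. Qed.

Lemma loc_eqv_refl u : loc_eqv I S u u.
Proof. by apply: loc_eqv_pointwise => n k; apply: frac_near_refl. Qed.

Lemma loc_eqv_sym u v : loc_eqv I S u v -> loc_eqv I S v u.
Proof. by move=> h n; case: (h n) => N hN; exists N => k /hN; apply: frac_near_sym. Qed.

Lemma loc_eqv_combine u u' v v' w w' :
  (forall n k, frac_near n (u k) (u' k) -> frac_near n (v k) (v' k) ->
     frac_near n (w k) (w' k)) ->
  loc_eqv I S u u' -> loc_eqv I S v v' -> loc_eqv I S w w'.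
Proof.
move=> h hu hv n; case: (hu n) => N1 h1; case: (hv n) => N2 h2.
exists (maxn N1 N2) => k; rewrite geq_max => /andP[k1 k2].
exact: h (h1 k k1) (h2 k k2).
Qed.

Lemma loc_eqv_trans v u w : den_in_S v ->
  loc_eqv I S u v -> loc_eqv I S v w -> loc_eqv I S u w.
Proof. by move=> Sv; apply: loc_eqv_combine => n k; apply: frac_near_trans. Qed.

Lemma loc_eqv_add u u' v v' : loc_eqv I S u u' -> loc_eqv I S v v' ->
  loc_eqv I S (fun k => frac_add (u k) (v k)) (fun k => frac_add (u' k) (v' k)).
Proof. by apply: loc_eqv_combine => n k; apply: frac_near_add. Qed.

Lemma loc_eqv_mul u u' v v' : loc_eqv I S u u' -> loc_eqv I S v v' ->
  loc_eqv I S (fun k => frac_mul (u k) (v k)) (fun k => frac_mul (u' k) (v' k)).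
Proof. by apply: loc_eqv_combine => n k; apply: frac_near_mul. Qed.

Lemma loc_valid_add u v : loc_valid I S u -> loc_valid I S v ->
  loc_valid I S (fun k => frac_add (u k) (v k)).
Proof.
move=> [Su cu] [Sv cv]; split=> [k|n]; first exact: mult_closedM.
case: (cu n) => N1 h1; case: (cv n) => N2 h2.
exists (maxn N1 N2) => k k'; rewrite !geq_max => /andP[k1 k2] /andP[k1' k2'].
exact: frac_near_add (h1 k k' k1 k1') (h2 k k' k2 k2').
Qed.

Lemma loc_valid_opp u : loc_valid I S u -> loc_valid I S (fun k => frac_opp (u k)).
Proof.
move=> [Su cu]; split=> // n; case: (cu n) => N h.
by exists N => k k' hk hk'; apply: frac_near_opp; apply: h.
Qed.

Lemma loc_valid_const p : S p.2 -> loc_valid I S (fun _ => p).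
Proof. by split=> // n; exists 0%N => k k' _ _; apply: frac_near_refl. Qed.

Lemma loc_valid_jloc b : loc_valid I S (jloc b).
Proof. exact/loc_valid_const/mult_closed1. Qed.

Lemma den_in_S_sum n (G : nat -> nat -> B * B) : (forall j, den_in_S (G j)) ->
  den_in_S (@lt_sum (ltLoc I S) n G).
Proof.
move=> SG; elim: n => [|n IHn] k /=; first exact: mult_closed1.
by apply: mult_closedM; [apply: IHn | apply: SG].
Qed.

Lemma loc_sum_last n (G : nat -> nat -> B * B) : (forall j, den_in_S (G j)) ->
  (forall j, (j < n)%N -> loc_eqv I S (G j) (jloc 0)) ->
  loc_eqv I S (@lt_sum (ltLoc I S) n.+1 G) (G n).
Proof.
move=> SG G0.
have sum0 m : (m <= n)%N -> loc_eqv I S (@lt_sum (ltLoc I S) m G) (jloc 0).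
  elim: m => [|m IHm] mn; first exact: loc_eqv_refl.
  apply: (@loc_eqv_trans (fun k => frac_add (jloc 0 k) (jloc 0 k))).
  - by move=> k; rewrite /= mulr1; apply: mult_closed1.
  - by apply: loc_eqv_add; [apply: IHm; apply: ltnW | apply: G0].
  - by apply: loc_eqv_pointwise => n' k; apply: frac_near_eq => /=; ring.
apply: (@loc_eqv_trans (fun k => frac_add (jloc 0 k) (G n k))).
- by move=> k; rewrite /= mul1r; apply: SG.
- by apply: loc_eqv_add; [apply: sum0 | apply: loc_eqv_refl].
- by apply: loc_eqv_pointwise => n' k; apply: frac_near_eq => /=; ring.
Qed.

Lemma lt_natmul_ltB c (y : B) : @lt_natmul (ltB I) c y = y *+ c.
Proof. by elim: c => [|c IHc] //=; rewrite IHc mulrS. Qed.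

Lemma loc_sum_common_den (F : nat -> nat -> B * B) k d n :
  (forall j, (F j k).2 = d) ->
  ((@lt_sum (ltLoc I S) n F) k).2 = d ^+ n /\
  ((@lt_sum (ltLoc I S) n F) k).1 * d = @lt_sum (ltB I) n (fun j => (F j k).1) * d ^+ n.
Proof.
move=> dF; elim: n => [|n [IH2 IH1]] /=; first by rewrite !mul0r.
rewrite /frac_add /= IH2 dF exprSr; split => //.
by rewrite mulrDl IH1; ring.
Qed.

Lemma loc_natmul_den (u : nat -> B * B) k c :
  ((@lt_natmul (ltLoc I S) c u) k).2 = (u k).2 ^+ c /\
  ((@lt_natmul (ltLoc I S) c u) k).1 * (u k).2 = ((u k).1 *+ c) * (u k).2 ^+ c.
Proof.
elim: c => [|c [IH2 IH1]] /=; first by rewrite mul0r mulr0n mul0r.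
rewrite /lt_natmul /= in IH1 IH2 *.
rewrite /frac_add /= IH2 exprS; split => //.
by rewrite mulrDl mulrAC IH1 mulrS; ring.
Qed.

Variable e : B -> nat -> B.
Hypotheses (he : @is_rexp (ltB I) e) (he_fixed : forall s, S s -> @rexp_fixed (ltB I) e s).

Lemma e_add x y i : e (x + y) i = e x i + e y i.
Proof. by apply: (rexp_add he). Qed.

Lemma e_fixed s i : S s -> e s i = if i == 0%N then s else 0.
Proof. by move=> /he_fixed; apply. Qed.

Lemma e0 i : e 0 i = 0.
Proof. by apply: (@addrI _ (e 0 i)); rewrite addr0 -e_add addr0. Qed.

Lemma eB x y i : e (x - y) i = e x i - e y i.
Proof.
have eN : e (- y) i = - e y i by apply/eqP; rewrite -addr_eq0 -e_add addNr e0.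
by rewrite e_add eN.
Qed.

Lemma e_mulS x s l : S s -> e (x * s) l = e x l * s.
Proof.
move=> Ss; rewrite (rexp_mul he) //=.
have vanish n : (n <= l)%N -> @lt_sum (ltB I) n (fun i => e x i * e s (l - i)%N) = 0.
  elim: n => [|n IHn] nl //=; rewrite IHn ?(ltnW nl) // (e_fixed (l - n)%N Ss).
  by rewrite subn_eq0 leqNgt nl /= mulr0 addr0.
by rewrite vanish // (e_fixed (l - l)%N Ss) subnn /= add0r.
Qed.

Lemma e_cont_satI n : exists m, forall y i, satI m y -> satI n (e y i).
Proof.
case: (rexp_cont he n) => m hm; exists m => y i [t [St h]]; exists t; split => //.
by rewrite mulrC -e_mulS // mulrC; apply: hm.
Qed.

Lemma frac_near_e n : exists m, forall p q i, S p.2 -> S q.2 -> frac_near m p q ->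
  frac_near n (e p.1 i, p.2) (e q.1 i, q.2).
Proof.
case: (e_cont_satI n) => m hm; exists m => p q i Sp Sq /(hm _ i).
by rewrite eB !e_mulS.
Qed.

Definition loc_rexp (u : nat -> B * B) (i : nat) : nat -> B * B :=
  fun k => (e (u k).1 i, (u k).2).

Lemma loc_rexp_valid x i : loc_valid I S x -> loc_valid I S (loc_rexp x i).
Proof.
move=> [Sx cx]; split=> // n; case: (frac_near_e n) => m hm; case: (cx m) => N hN.
by exists N => k k' hk hk'; apply: hm; [apply: Sx | apply: Sx | apply: hN].
Qed.

Lemma loc_rexp_eqv x y i : loc_valid I S x -> loc_valid I S y ->
  loc_eqv I S x y -> loc_eqv I S (loc_rexp x i) (loc_rexp y i).
Proof.
move=> [Sx _] [Sy _] hxy n; case: (frac_near_e n) => m hm; case: (hxy m) => N hN.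
by exists N => k hk; apply: hm; [apply: Sx | apply: Sy | apply: hN].
Qed.

(* Compare with the fixed term x_K: e_i x_K lies in I_n for large i, and
   e_i (x_k - x_K) is small uniformly in i by continuity. *)
Lemma loc_rexp_restricted x n : loc_valid I S x ->
  exists N, forall i, (N <= i)%N -> loc_ideal I S n (loc_rexp x i).
Proof.
move=> [Sx cx]; case: (e_cont_satI n) => m hm; case: (cx m) => K hK.
case: (rexp_restricted he n (x := (x K).1) Logic.I) => N hN.
exists N => i hi; exists K => k hk.
have near_xK : satI n (e (x k).1 i * (x K).2 - e (x K).1 i * (x k).2).
  by have := hm _ i (hK k K hk (leqnn K)); rewrite eB !e_mulS.
apply: (satI_cancel (Sx K)); rewrite mulrC.
apply: eq_satI (satID near_xK (satIMl (x k).2 (satI_of_ideal (hN i hi)))).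
by rewrite /loc_rexp /=; ring.
Qed.

Lemma loc_rexp_is_rexp : @is_rexp (ltLoc I S) loc_rexp.
Proof.
split; first by move=> x i; apply: loc_rexp_valid.
split; first by move=> x y i; apply: loc_rexp_eqv.
split; first by move=> x vx n; apply: loc_rexp_restricted.
split.
  move=> x y i [Sx _] [Sy _]; apply: loc_eqv_pointwise => n k.
  by apply: frac_near_eq; rewrite /= e_add !e_mulS.
split.
  move=> x y l _ _; apply: loc_eqv_pointwise => n k; apply: frac_near_eq.
  pose F i := @lt_mul (ltLoc I S) (loc_rexp x i) (loc_rexp y (l - i)%N).
  have [den num] := @loc_sum_common_den F k ((x k).2 * (y k).2) l.+1 (fun j => erefl).
  by rewrite /= in den num *; rewrite den num (rexp_mul he).
split.
  move=> l; apply: loc_eqv_pointwise => n k; rewrite /loc_rexp /= (rexp_one he).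
  by case: l => [|l] /=; apply: frac_near_refl.
split.
  move=> n; case: (e_cont_satI n) => m hm; exists m => x _ [N hN] i.
  by exists N => k hk; apply: hm; apply: hN.
split.
  move=> x _; apply: loc_eqv_pointwise => n k.
  by rewrite /loc_rexp (rexp_id he) //; apply: frac_near_refl.
move=> x i j _; apply: loc_eqv_pointwise => n k; apply: frac_near_eq.
have [den num] := loc_natmul_den (loc_rexp x (i + j)) k 'C(i + j, i).
by rewrite /= in den num *; rewrite den num (rexp_iter he) // lt_natmul_ltB.
Qed.

Lemma loc_rexp_jloc b i : loc_eqv I S (jloc (e b i)) (loc_rexp (jloc b) i).
Proof. exact: loc_eqv_refl. Qed.

Section Uniqueness.
Variable E' : (nat -> B * B) -> nat -> (nat -> B * B).
Hypotheses (hE' : @is_rexp (ltLoc I S) E')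
  (hE'j : forall b i, loc_eqv I S (jloc (e b i)) (E' (jloc b) i)).

Lemma den_in_S_E' x i : loc_valid I S x -> den_in_S (E' x i).
Proof. by move=> /(rexp_dom hE' i) []. Qed.

Lemma E'_jloc_fixed s m : S s ->
  loc_eqv I S (E' (jloc s) m) (jloc (if m == 0%N then s else 0)).
Proof. by move=> Ss; rewrite -(e_fixed m Ss); apply: loc_eqv_sym. Qed.

Lemma E'_const_frac p i : S p.2 ->
  loc_eqv I S (E' (fun _ => p) i) (fun _ => (e p.1 i, p.2)).
Proof.
move=> Sp; set c := fun _ : nat => p; set s := p.2.
have vc : loc_valid I S c by apply: loc_valid_const.
have vcs : loc_valid I S (fun k => frac_mul (c k) (jloc s k)).
  by apply: (@loc_valid_const (frac_mul p (s, 1))); rewrite /= mulr1.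
pose G j k := frac_mul (E' c j k) (E' (jloc s) (i - j)%N k).
have SG j : den_in_S (G j).
  by move=> k; apply: mult_closedM; apply: den_in_S_E' => //; apply: loc_valid_jloc.
have G_small j : (j < i)%N -> loc_eqv I S (G j) (jloc 0).
  move=> ji; apply: (@loc_eqv_trans (fun k => frac_mul (E' c j k) (jloc 0 k))).
  - by move=> k; rewrite /= mulr1; apply: den_in_S_E'.
  - apply: loc_eqv_mul; first exact: loc_eqv_refl.
    by have := E'_jloc_fixed (i - j) Sp; rewrite subn_eq0 leqNgt ji.
  - by apply: loc_eqv_pointwise => n k; apply: frac_near_eq => /=; ring.
have G_last : loc_eqv I S (G i) (fun k => frac_mul (E' c i k) (s, 1)).
  apply: loc_eqv_mul; first exact: loc_eqv_refl.
  by have := E'_jloc_fixed (i - i) Sp; rewrite subnn.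
have prod : loc_eqv I S (jloc (e p.1 i)) (fun k => frac_mul (E' c i k) (s, 1)).
  have jc : loc_eqv I S (jloc p.1) (fun k => frac_mul (c k) (jloc s k)).
    by apply: loc_eqv_pointwise => n k; apply: frac_near_eq => /=; ring.
  apply: (loc_eqv_trans (den_in_S_E' _ (loc_valid_jloc _)) (hE'j _ _)).
  apply: (loc_eqv_trans (den_in_S_E' _ vcs) (rexp_eqv hE' i (loc_valid_jloc _) vcs jc)).
  apply: (loc_eqv_trans (den_in_S_sum _ SG) (rexp_mul hE' _ vc (loc_valid_jloc _))).
  exact: loc_eqv_trans (SG i) (loc_sum_last SG G_small) G_last.
move=> n; case: (prod n) => N hN; exists N => k /hN h.
by apply: frac_near_sym; apply: eq_satI h; rewrite /= /s; ring.
Qed.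

(* Write x = c + d with c the constant x_K and d small in S^-1 I_m; then
   E'(x) = E'(c) + E'(d), where E'(c) is known and E'(d) is small. *)
Lemma E'_unique x i : loc_valid I S x -> loc_eqv I S (loc_rexp x i) (E' x i).
Proof.
move=> vx; have [Sx cx] := vx; move=> n.
case: (rexp_cont hE' n) => m hm; case: (e_cont_satI n) => m' hm'.
case: (cx (m + m')%N) => K hK.
set c := fun _ : nat => x K.
have vc : loc_valid I S c by apply: loc_valid_const.
pose d k := frac_add (x k) (frac_opp (c k)).
have vd : loc_valid I S d by apply: loc_valid_add => //; apply: loc_valid_opp.
have d_small : loc_ideal I S m d.
  exists K => k hk; have := satI_decr (leq_addr m' m) (hK k K hk (leqnn K)).
  by apply: eq_satI; rewrite /d /c /=; ring.
case: (hm d vd d_small i) => N1 hN1.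
have vcd : loc_valid I S (fun k => frac_add (c k) (d k)) by apply: loc_valid_add.
pose Z k := frac_add (e (x K).1 i, (x K).2) (E' d i k).
have E'x : loc_eqv I S (E' x i) Z.
  have xcd : loc_eqv I S x (fun k => frac_add (c k) (d k)).
    by apply: loc_eqv_pointwise => n' k; apply: frac_near_eq; rewrite /d /c /=; ring.
  apply: (loc_eqv_trans (den_in_S_E' _ vcd) (rexp_eqv hE' i vx vcd xcd)).
  apply: (@loc_eqv_trans (fun k => frac_add (E' c i k) (E' d i k))).
  - by move=> k; apply: mult_closedM; apply: den_in_S_E'.
  - exact: (rexp_add hE').
  - by apply: loc_eqv_add; [apply: E'_const_frac | apply: loc_eqv_refl].
case: (E'x n) => N2 hN2.
exists (maxn K (maxn N1 N2)) => k; rewrite !geq_max => /and3P[k1 k2 k3].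
apply: (@frac_near_trans _ _ (Z k)); last by apply: frac_near_sym; apply: hN2.
  by apply: mult_closedM; [apply: Sx | apply: den_in_S_E'].
have h := hm' _ i (satI_decr (leq_addl m m') (hK k K k1 (leqnn K))).
rewrite eB !e_mulS // in h.
apply: eq_satI (satID (satIMl (E' d i k).2 h) (satIMl (- ((x K).2 * (x k).2)) (hN1 k k2))).
by rewrite /Z /loc_rexp /=; ring.
Qed.

End Uniqueness.
End Localization.

Theorem proposition2p6 (B : comPzRingType) (I : nat -> B -> Prop)
  (e : B -> nat -> B) (S : B -> Prop) :
  fund_system I -> complete_ring I ->
  @is_rexp (ltB I) e ->
  mult_closed S -> (forall s, S s -> @rexp_fixed (ltB I) e s) ->
  exists E : (nat -> B * B) -> nat -> (nat -> B * B),
    (@is_rexp (ltLoc I S) E /\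
     (forall b i, loc_eqv I S (jloc (e b i)) (E (jloc b) i))) /\
    (forall E' : (nat -> B * B) -> nat -> (nat -> B * B),
       @is_rexp (ltLoc I S) E' ->
       (forall b i, loc_eqv I S (jloc (e b i)) (E' (jloc b) i)) ->
       forall x, loc_valid I S x -> forall i, loc_eqv I S (E x i) (E' x i)).
Proof.
move=> hI _ he hS he_fixed; exists (loc_rexp e); split.
  by split; [exact: loc_rexp_is_rexp | exact: loc_rexp_jloc].
by move=> E' hE' hE'j x vx i; apply: E'_unique.
Qed.
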